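(* Let $2\leq r\leq n$ be integers and $(s_2,\ldots,s_r)\in\mathbb{N}^{r-1}$. Then there exists an integer $N$ (depending on $n$ and $(s_2,\ldots,s_r)$) such that $\overline{H}_n(s_1,s_2,\ldots,s_r)$ is not an integer for every positive integer $s_1>N$.
   Context: $\mathbb{N}$ is the set of positive integers and $\overline{H}_n(s_1,\ldots,s_r)=\sum_{0\leq k_1<\cdots<k_r\leq n-1}\prod_{j=1}^r (2k_j+1)^{-s_j}$. *)

From mathcomp Require Import all_boot all_order all_algebra.
Set Implicit Arguments. Unset Strict Implicit. Unset Printing Implicit Defensive.
Import Order.TTheory GRing.Theory Num.Theory.
Local Open Scope ring_scope.

Definition Hbar (n : nat) (s : seq nat) : rat :=
  \sum_(k : (size s).-tuple 'I_n | sorted ltn (map val k))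
     \prod_(j < size s) (((2 * tnth k j).+1)%:R ^- (nth 0%N s j)).

From mathcomp Require Import all_boot all_order all_algebra.
From mathcomp Require Import zify.
Import Order.TTheory GRing.Theory Num.Theory.
Local Open Scope ring_scope.

(* Split the sum according to whether k_1 = 0. The terms with k_1 = 0 do not
   involve s_1 and add up to a constant A; every other term carries a factor
   (2 k_1 + 1)^(-s_1) <= 3^(-s_1), so their total B(s_1) tends to 0, and it is
   positive when r < n because the index tuple (1, ..., r) occurs. Hence
   floor A < A + B(s_1) < floor A + 1 for large s_1. When r = n the only index
   tuple is (0, ..., n-1), so Hbar_n is a product of reciprocals of odd numbers
   containing the factor 3^(-s_2) < 1, and it lies strictly between 0 and 1. *)

Lemma natS_expV_gt0 {R : numFieldType} (a e : nat) : 0 < (a.+1)%:R ^- e :> R.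
Proof. by rewrite invr_gt0 exprn_gt0 ?ltr0Sn. Qed.

Lemma natS_expV_le1 {R : numFieldType} (a e : nat) : (a.+1)%:R ^- e <= 1 :> R.
Proof. by rewrite invf_le1 ?exprn_gt0 ?ltr0Sn // exprn_ege1 // ler1n. Qed.

Lemma natS_expV_lt1 {R : numFieldType} (a e : nat) :
  (0 < a)%N -> (0 < e)%N -> (a.+1)%:R ^- e < 1 :> R.
Proof.
move=> a_gt0 e_gt0.
by rewrite invf_lt1 ?exprn_gt0 ?ltr0Sn // exprn_egt1 ?ltr1n ?ltnS -?lt0n.
Qed.

Lemma oddS_expV_le {R : numFieldType} (a e : nat) :
  (0 < a)%N -> ((2 * a).+1)%:R ^- e <= (3 ^ e)%:R^-1 :> R.
Proof.
move=> a_gt0; rewrite natrX lef_pV2 ?posrE ?exprn_gt0 ?ltr0Sn //.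
by rewrite lerXn2r ?nnegrE ?ler0n // ler_nat; lia.
Qed.

Lemma not_int_between {R : numDomainType} (x : R) (m : int) :
  m%:~R < x < (m + 1)%:~R -> ~ exists z : int, x = z%:~R.
Proof. by case/andP=> + + [z xz]; rewrite xz !ltr_int; lia. Qed.

Lemma not_int_addr_small {R : archiRealFieldType} (x y : R) :
  0 < y -> y < (Num.floor x + 1)%:~R - x -> ~ exists z : int, x + y = z%:~R.
Proof.
move=> y_gt0 y_lt; apply: (@not_int_between _ _ (Num.floor x)).
apply/andP; split.
  by rewrite -[_%:~R]addr0 ler_ltD // floor_le.
by rewrite -ltrBrDl.
Qed.

Lemma natr_div_expn_eventually_lt {R : archiNumFieldType}
    (q M : nat) (eps : R) :
  (1 < q)%N -> 0 < eps ->
  exists N : nat, forall e, (N < e)%N -> M%:R / (q ^ e)%:R < eps.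
Proof.
move=> q_gt1 eps_gt0.
have M_eps_ge0 : 0 <= M%:R / eps by rewrite divr_ge0 ?ler0n ?ltW.
exists (Num.Def.archi_bound (M%:R / eps)) => e N_lt_e.
have qe_gt0 : 0 < (q ^ e)%:R :> R by rewrite ltr0n expn_gt0; lia.
rewrite ltr_pdivrMr // mulrC -ltr_pdivrMr //.
apply: (lt_trans (archi_boundP M_eps_ge0)); rewrite ltr_nat.
exact: ltn_trans N_lt_e (ltn_expl _ q_gt1).
Qed.

Lemma map_val_ord_tuple (n : nat) : map val (ord_tuple n) = iota 0 n.
Proof. by rewrite val_ord_tuple val_enum_ord. Qed.

Lemma sorted_ltn_ord_tuple (n : nat) (k : n.-tuple 'I_n) :
  sorted ltn (map val k) = (k == ord_tuple n).
Proof.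
apply/idP/eqP=> [k_sorted | ->]; last first.
  by rewrite map_val_ord_tuple iota_ltn_sorted.
apply/val_inj/(inj_map val_inj); rewrite map_val_ord_tuple.
have k_uniq : uniq (map val k) := sorted_uniq ltn_trans ltnn k_sorted.
have k_sub : {subset map val k <= iota 0 n}.
  by move=> _ /mapP [i _ ->]; rewrite mem_iota add0n ltn_ord.
have k_size : (size (iota 0 n) <= size (map val k))%N.
  by rewrite size_iota size_map size_tuple.
have [_ k_eqi] := uniq_min_size k_uniq k_sub k_size.
exact: (irr_sorted_eq ltn_trans ltnn k_sorted (iota_ltn_sorted 0 n) k_eqi).
Qed.

Lemma Hbar_full (s : seq nat) :
  Hbar (size s) s = \prod_(j < size s) ((2 * j).+1)%:R ^- nth 0%N s j.
Proof.
rewrite /Hbar (big_pred1 (ord_tuple _)) => [|k]; last first.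
  exact: sorted_ltn_ord_tuple.
by apply: eq_bigr => j _; rewrite tnth_ord_tuple.
Qed.

Lemma Hbar_full_gt0 (s : seq nat) : 0 < Hbar (size s) s.
Proof. by rewrite Hbar_full; apply: prodr_gt0 => j _; apply: natS_expV_gt0. Qed.

Lemma Hbar_full_lt1 (s : seq nat) (j : 'I_(size s)) :
  (0 < j)%N -> (0 < nth 0%N s j)%N -> Hbar (size s) s < 1.
Proof.
move=> j_gt0 sj_gt0; rewrite Hbar_full (bigD1 j) //=.
apply: (@le_lt_trans _ _ (((2 * j).+1)%:R ^- nth 0%N s j * 1)).
  rewrite ler_wpM2l ?(ltW (natS_expV_gt0 _ _)) //.
  by apply: prodr_ile1 => i _; rewrite (ltW (natS_expV_gt0 _ _)) natS_expV_le1.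
by rewrite mulr1 natS_expV_lt1 ?muln_gt0.
Qed.

Section LeadingIndex.
Variables (n : nat) (s : seq nat).

Definition tail_weight (k : (size s).+1.-tuple 'I_n) : rat :=
  \prod_(j < size s) ((2 * tnth k (lift ord0 j)).+1)%:R ^- nth 0%N s j.

Definition Hbar_lead0 : rat :=
  \sum_(k : (size s).+1.-tuple 'I_n |
          sorted ltn (map val k) && (val (tnth k ord0) == 0%N))
    tail_weight k.

Definition Hbar_leadpos (e : nat) : rat :=
  \sum_(k : (size s).+1.-tuple 'I_n |
          sorted ltn (map val k) && (val (tnth k ord0) != 0%N))
    ((2 * tnth k ord0).+1)%:R ^- e * tail_weight k.

Lemma Hbar_cons (e : nat) : Hbar n (e :: s) = Hbar_lead0 + Hbar_leadpos e.
Proof.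
rewrite /Hbar (bigID (fun k => val (tnth k ord0) == 0%N)) /=.
congr (_ + _); apply: eq_bigr => k; last by rewrite big_ord_recl.
case/andP=> _ /eqP k0.
by rewrite big_ord_recl k0 muln0 mulr1n expr1n invr1 mul1r.
Qed.

Lemma tail_weight_gt0 k : 0 < tail_weight k.
Proof. by apply: prodr_gt0 => j _; apply: natS_expV_gt0. Qed.

Lemma tail_weight_le1 k : tail_weight k <= 1.
Proof.
by apply: prodr_ile1 => j _; rewrite (ltW (natS_expV_gt0 _ _)) natS_expV_le1.
Qed.

Lemma Hbar_leadpos_le (e : nat) :
  Hbar_leadpos e <= #|{: (size s).+1.-tuple 'I_n}|%:R / (3 ^ e)%:R.
Proof.
apply: (@le_trans _ _ (\sum_(k : (size s).+1.-tuple 'I_n) (3 ^ e)%:R^-1)).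
  2: by rewrite sumr_const mulr_natl.
rewrite /Hbar_leadpos big_mkcond /=.
apply: ler_sum => k _; case: ifP => [/andP [_ k0_neq0] | _].
  rewrite -[leRHS]mulr1; apply: ler_pM.
  - exact/ltW/natS_expV_gt0.
  - exact/ltW/tail_weight_gt0.
  - by apply: oddS_expV_le; rewrite lt0n.
  - exact: tail_weight_le1.
by rewrite invr_ge0 ler0n.
Qed.

Lemma Hbar_leadpos_gt0 (e : nat) : ((size s).+1 < n)%N -> 0 < Hbar_leadpos e.
Proof.
move=> r_lt_n.
pose k1 := [tuple widen_ord r_lt_n (lift ord0 j) | j < (size s).+1].
have k1_sorted : sorted ltn (map val k1).
  rewrite /k1 /= -map_comp (@eq_map _ _ _ (succn \o val)) //.
  rewrite map_comp map_val_ord_tuple.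
  exact: homo_sorted (iota_ltn_sorted 0 _).
rewrite /Hbar_leadpos (bigD1 k1) /=; last by rewrite k1_sorted tnth_mktuple.
apply: ltr_wpDr; last by rewrite mulr_gt0 ?natS_expV_gt0 ?tail_weight_gt0.
apply: sumr_ge0 => k _.
by rewrite mulr_ge0 // ltW ?natS_expV_gt0 ?tail_weight_gt0.
Qed.

End LeadingIndex.

Theorem lemma2p8 (n : nat) (s' : seq nat) :
  (1 <= size s')%N -> ((size s').+1 <= n)%N ->
  all (fun x => 0 < x)%N s' ->
  exists N : nat, forall s1 : nat, (N < s1)%N ->
    ~ (exists z : int, Hbar n (s1 :: s') = z%:~R).
Proof.
move=> s'_gt0 r_le_n s'_pos.
have [r_lt_n | n_le_r] := ltnP (size s').+1 n.
  pose A := Hbar_lead0 n s'.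
  have gap_gt0 : 0 < (Num.floor A + 1)%:~R - A by rewrite subr_gt0 floorD1_gt.
  have [N small] := natr_div_expn_eventually_lt 3
    #|{: (size s').+1.-tuple 'I_n}| _ isT gap_gt0.
  exists N => s1 /small lt_gap; rewrite Hbar_cons.
  apply: not_int_addr_small; first exact: Hbar_leadpos_gt0.
  exact: le_lt_trans (Hbar_leadpos_le _ _ _) lt_gap.
exists 0%N => s1 _.
have -> : n = size (s1 :: s') by apply/eqP; rewrite eqn_leq r_le_n n_le_r.
apply: (@not_int_between _ _ 0); rewrite Hbar_full_gt0 add0r mulr1z /=.
have j1 : (1 < size (s1 :: s'))%N := s'_gt0.
apply: (@Hbar_full_lt1 _ (Ordinal j1)) => //=.
by apply: (allP s'_pos); apply: mem_nth.
Qed.
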